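(* The set of modified ascent sequences equals the set of Cayley permutations avoiding the mesh patterns $\mathfrak{a}$ and $\mathfrak{b}$: $\mathrm{Modasc}=\mathrm{Cay}(\mathfrak{a},\mathfrak{b})$. Consequently $\{\mathfrak{a},\mathfrak{b}\}$ and $\{11,\mathfrak{f}\}$ are Wilf-equivalent over Cayley permutations, i.e. $|\mathrm{Cay}_n(\mathfrak{a},\mathfrak{b})|=|\mathrm{Cay}_n(11,\mathfrak{f})|$ for all $n$, where $\mathrm{Cay}_n(11,\mathfrak{f})$ is the set of Fishburn permutations of length $n$.
   Context: A Cayley permutation of length $n$ is a word $x=x(1)\cdots x(n)$ of positive integers in which every integer from $1$ to $\max(x)$ occurs; $\mathrm{Cay}_n$ is the set of these and $\mathrm{Cay}$ their union. Avoiding the pattern $11$ means having no repeated letter (i.e. being a permutation). Mesh patterns: a Cayley permutation $x$ contains $\mathfrak{a}$ if there are indices $i<j<n$ with $x(j)<x(i)=x(j+1)$. It contains $\mathfrak{b}$ if there is an index $i<n$ with $x(i)>x(i+1)$ and no index $m<i$ with $x(m)=x(i+1)$. $\mathrm{Cay}(\mathfrak{a},\mathfrak{b})$ is the set of Cayley permutations containing neither; $\mathrm{Cay}_n(\cdot)$ restricts to length $n$. Modified ascent sequences: $\mathrm{Modasc}_0=\{\text{empty word}\}$, $\mathrm{Modasc}_1=\{1\}$; for $n\ge2$, $x\in\mathrm{Modasc}_n$ iff there is $v\in\mathrm{Modasc}_{n-1}$ with last letter $b$ such that either $x=va$ with $1\le a\le b$, or $x=\tilde va$ with $b<a\le2+\mathrm{asc}(v)$,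 where $\mathrm{asc}(v)=|\{i:v(i)<v(i+1)\}|$ and $\tilde v$ is $v$ with every entry $c\ge a$ increased by one. $\mathrm{Modasc}=\bigcup_n\mathrm{Modasc}_n$. $\mathfrak{f}$ is the bivincular pattern $(231,\{1\},\{1\})$: a permutation $\pi$ contains it if there are indices $i$ and $k>i+1$ with $\pi(i)<\pi(i+1)$ and $\pi(k)=\pi(i)-1$. Permutations avoiding $\mathfrak{f}$ are the Fishburn permutations. *)

(* Words are seq nat; positions are 0-indexed internally
   (position p here = position p+1 in the paper). *)
From mathcomp Require Import all_boot.
Set Implicit Arguments. Unset Strict Implicit. Unset Printing Implicit Defensive.

Definition maxw (x : seq nat) : nat := foldr maxn 0 x.

Definition cayley (x : seq nat) : bool :=
  (0 \notin x) && all (fun v => v \in x) (iota 1 (maxw x)).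

Definition contains_a (x : seq nat) : bool :=
  has (fun i => has (fun j =>
     [&& i < j, j.+1 < size x, nth 0 x j < nth 0 x i & nth 0 x i == nth 0 x j.+1])
     (iota 0 (size x))) (iota 0 (size x)).

Definition contains_b (x : seq nat) : bool :=
  has (fun i => [&& i.+1 < size x, nth 0 x i.+1 < nth 0 x i &
                 ~~ has (fun m => nth 0 x m == nth 0 x i.+1) (iota 0 i)])
      (iota 0 (size x)).

(* bivincular pattern f = (231,{1},{1}): i, k > i+1, pi(i) < pi(i+1), pi(k) = pi(i) - 1 *)
Definition contains_f (x : seq nat) : bool :=
  has (fun i => has (fun k =>
     [&& i.+1 < k, k < size x, nth 0 x i < nth 0 x i.+1 & (nth 0 x k).+1 == nth 0 x i])
     (iota 0 (size x))) (iota 0 (size x)).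

Definition asc (v : seq nat) : nat :=
  count (fun i => (i.+1 < size v) && (nth 0 v i < nth 0 v i.+1)) (iota 0 (size v)).

Definition tilde (v : seq nat) (a : nat) : seq nat :=
  map (fun c => if a <= c then c.+1 else c) v.

Inductive modasc : seq nat -> Prop :=
| modasc0 : modasc [::]
| modasc1 : modasc [:: 1]
| modasc_weak : forall v a, modasc v -> v != [::] ->
    1 <= a -> a <= last 0 v -> modasc (rcons v a)
| modasc_strict : forall v a, modasc v -> v != [::] ->
    last 0 v < a -> a <= (asc v).+2 -> modasc (rcons (tilde v a) a).

From mathcomp Require Import all_boot zify.
Set Implicit Arguments. Unset Strict Implicit. Unset Printing Implicit Defensive.

(* Avoiding a and b says exactly that x has an ascent at p iff x(p) is the first
   occurrence of its value ([fresh_ascents]).  For Cayley words with this property the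
   number of distinct values, hence the maximum, is asc x + 1.  So if x = w a, either a
   occurs in w and a <= last w, or a is new, last w < a <= asc w + 2, and un-bumping the
   values above a turns w into a shorter such word: this is the recursion defining
   modified ascent sequences.

   For the enumeration, list the positions of x by increasing value, equal values from
   right to left ([sortpos]), so that every run of equal values ends at a first occurrence.
   An ascent p < q between consecutive entries can only occur at such a run end, so
   x(p-1) < x(p) and p-1 is listed before p: the permutation avoids f.  Conversely x is
   read off a Fishburn permutation s by labelling its entries 1, 2, ... and incrementing
   the label after entry j iff s(j) = 0 or s(j)-1 already carries a smaller label
   ([block_end]); avoiding f makes every ascent of s a block end and s decreasing inside
   each block, which is what the two maps need to be mutually inverse. *)

Lemma mem_takeP (x : seq nat) p v :
  reflect (exists2 r, (r < p) && (r < size x) & nth 0 x r = v) (v \in take p x).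
Proof.
apply: (iffP (nthP 0)) => -[r].
  rewrite size_take_min leq_min => /andP [rp rx].
  by rewrite nth_take // => <-; exists r; rewrite ?rp.
move=> /andP [rp rx] <-; exists r; first by rewrite size_take_min leq_min rp.
by rewrite nth_take.
Qed.

Definition fresh_ascents (x : seq nat) := forall p, 0 < p < size x ->
  (nth 0 x p.-1 < nth 0 x p) = (nth 0 x p \notin take p x).

Lemma fresh_ascentsP x : fresh_ascents x <-> ~~ contains_a x /\ ~~ contains_b x.
Proof.
split=> [fx | [na nb] p /andP [p0 px]].
  split.
    apply/hasP => -[i _ /hasP [j _ /and4P [ij jx lt /eqP eq]]].
    have := fx j.+1; rewrite /= jx -eq lt => /(_ isT) /esym /negP; apply.
    by apply/mem_takeP; exists i => //; apply/andP; split; lia.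
  apply/hasP => -[i _ /and3P [ix lt /hasP nh]].
  have := fx i.+1; rewrite /= ix ltnNge (ltnW lt) => /(_ isT) /esym /negbFE.
  case/mem_takeP => r /andP [ri _] e; apply: nh; exists r; last by rewrite e.
  have : r != i by apply: contraTneq lt => ri'; rewrite -e ri' ltnn.
  by rewrite mem_iota; lia.
case: (boolP (nth 0 x p \in take p x)) => [/mem_takeP [r /andP [rp _] e] | fresh] /=.
  apply/negbTE/negP => lt.
  have rp1 : r != p.-1 by apply: contraTneq lt => <-; rewrite e ltnn.
  move/hasP: na; apply; exists r; first by rewrite mem_iota; lia.
  apply/hasP; exists p.-1; first by rewrite mem_iota; lia.
  by rewrite e lt prednK // eqxx; apply/and3P; split => //; lia.
have notin r : r < p -> nth 0 x r != nth 0 x p.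
  by move=> rp; apply: contra fresh => /eqP e; apply/mem_takeP; exists r => //; lia.
rewrite ltn_neqAle notin ?prednK //=; apply/negbNE/negP => ge.
move/hasP: nb; apply; exists p.-1; first by rewrite mem_iota; lia.
rewrite prednK // px ltnNge ge /=.
by apply/hasP => -[m]; rewrite mem_iota => mp; apply/negP/notin; lia.
Qed.

Lemma maxw_ub x y : y \in x -> y <= maxw x.
Proof.
elim: x => //= z x IH; rewrite in_cons => /orP [/eqP -> | /IH yx].
  exact: leq_maxl.
exact: leq_trans yx (leq_maxr _ _).
Qed.

Lemma maxw_mem x : x != [::] -> maxw x \in x.
Proof.
elim: x => // z x IH _; rewrite /= in_cons.
case: x IH => [_ | z' x IH]; first by rewrite maxn0 eqxx.
rewrite /maxn; case: ltnP => _; last by rewrite eqxx.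
by rewrite IH ?orbT.
Qed.

Definition down_closed (x : seq nat) := forall y u, y \in x -> 0 < u <= y -> u \in x.

Lemma cayleyP x : reflect (0 \notin x /\ down_closed x) (cayley x).
Proof.
apply: (iffP andP) => -[x0 hx]; split => //.
  move=> y u yx u_le; apply: (allP hx).
  by rewrite mem_iota; have := maxw_ub yx; lia.
apply/allP => u; rewrite mem_iota => u_le.
have xn : x != [::] by apply: contraTneq u_le => ->; rewrite /=; lia.
by apply: (hx (maxw x)); [exact: maxw_mem | lia].
Qed.

Lemma cayley_pos x v : cayley x -> v \in x -> 0 < v.
Proof. by case/andP => x0 _ vx; rewrite lt0n; apply: contraNneq x0 => <-. Qed.

Lemma cayley_undup x : cayley x -> perm_eq (undup x) (iota 1 (maxw x)).
Proof.
move=> cx; apply: uniq_perm; rewrite ?undup_uniq ?iota_uniq // => u.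
rewrite mem_undup mem_iota; apply/idP/idP => [ux | u_le].
  by have := maxw_ub ux; have := cayley_pos cx ux; lia.
by apply: (allP (proj2 (andP cx))); rewrite mem_iota.
Qed.

Lemma cayley_leq_size x v : cayley x -> v \in x -> v <= size x.
Proof.
move=> cx vx; apply: leq_trans (maxw_ub vx) _.
by rewrite -(size_iota 1 (maxw x)) -(perm_size (cayley_undup cx)) size_undup.
Qed.

Lemma fresh_ascents_rcons w a : fresh_ascents (rcons w a) <->
  fresh_ascents w /\ (w != [::] -> (last 0 w < a) = (a \notin w)).
Proof.
have take_w p : p <= size w -> take p (rcons w a) = take p w.
  by move=> pw; rewrite -cats1 takel_cat.
have nth_w p : p < size w -> nth 0 (rcons w a) p = nth 0 w p.
  by move=> pw; rewrite nth_rcons pw.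
have size_pos : w != [::] -> 0 < size w by case: (w).
have at_end : w != [::] ->
    (nth 0 (rcons w a) (size w).-1 < nth 0 (rcons w a) (size w)) =
    (nth 0 (rcons w a) (size w) \notin take (size w) (rcons w a)) <->
    (last 0 w < a) = (a \notin w).
  move/size_pos => w0; rewrite take_w // take_size nth_w; last by lia.
  by rewrite nth_rcons ltnn eqxx nth_last.
split=> [fx | [fw fa] p].
  split=> [p /andP [p0 pw] | wn]; last first.
    by apply/(at_end wn)/fx; rewrite size_rcons (size_pos wn) ltnSn.
  by have := fx p; rewrite size_rcons take_w ?(ltnW pw) // !nth_w //; lia.
move=> /andP [p0]; rewrite size_rcons ltnS leq_eqVlt => /orP [/eqP pw | pw].
  have wn : w != [::] by apply: contraTneq p0 => wnil; rewrite pw wnil.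
  by rewrite pw; apply/(at_end wn)/fa.
rewrite take_w ?(ltnW pw) // !nth_w //; last by lia.
by apply: fw; rewrite p0.
Qed.

Lemma asc_rcons w a : asc (rcons w a) = asc w + ((0 < size w) && (last 0 w < a)).
Proof.
rewrite /asc size_rcons -addn1 iotaD count_cat add0n /= addn1 ltnn /= addn0.
case/lastP: w => [//| u b]; rewrite size_rcons -[(size u).+1]addn1 iotaD !count_cat add0n /=.
rewrite addn1 !ltnS leqnn ltnn /= !addn0 last_rcons.
rewrite !nth_rcons !size_rcons ltnSn !ltnn !eqxx /=; congr (_ + _).
apply: eq_in_count => i; rewrite mem_iota => /andP [_ ilt].
by rewrite !nth_rcons !size_rcons !ltnS ilt !(ltnW ilt).
Qed.

Lemma size_undup_rcons w (a : nat) :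
  size (undup (rcons w a)) = size (undup w) + (a \notin w).
Proof.
have perm_cons : perm_eq (undup (rcons w a)) (undup (a :: w)).
  by apply: uniq_perm; rewrite ?undup_uniq // => u; rewrite !mem_undup mem_rcons.
by rewrite (perm_size perm_cons) /=; case: (a \in w); rewrite /= ?addn0 ?addn1.
Qed.

Lemma size_undup_fresh_ascents x : fresh_ascents x -> x != [::] ->
  size (undup x) = (asc x).+1.
Proof.
elim/last_ind: x => // w a IH /fresh_ascents_rcons [fw fa] _.
have [-> // | wn] := eqVneq w [::].
rewrite size_undup_rcons asc_rcons IH // -fa //.
by case: (w) wn.
Qed.

Lemma maxw_fresh_ascents x : cayley x -> fresh_ascents x -> x != [::] ->
  maxw x = (asc x).+1.
Proof.
move=> cx fx xn.
by rewrite -size_undup_fresh_ascents // (perm_size (cayley_undup cx)) size_iota.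
Qed.

Section MonotoneRelabelling.

Variables (f : nat -> nat) (w : seq nat).
Hypothesis f_mono : {in w &, {mono f : c d / c <= d}}.

Let f_ltn : {in w &, {mono f : c d / c < d}}.
Proof. exact: leqW_mono_in. Qed.

Lemma fresh_ascents_map : fresh_ascents (map f w) <-> fresh_ascents w.
Proof.
have same p : 0 < p < size w ->
    ((nth 0 (map f w) p.-1 < nth 0 (map f w) p) =
     (nth 0 (map f w) p \notin take p (map f w))) =
    ((nth 0 w p.-1 < nth 0 w p) = (nth 0 w p \notin take p w)).
  move=> /andP [p0 pw]; have p1w : p.-1 < size w by lia.
  rewrite !(nth_map 0) // f_ltn ?mem_nth // -map_take; congr (_ = ~~ _).
  apply/mapP/idP => [[c ct /eqP] | pt]; last by exists (nth 0 w p).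
  by rewrite (inj_in_eq (incn_inj_in f_mono)) ?mem_nth ?(mem_take ct) // => /eqP ->.
split=> fx p px; first by rewrite -same // fx ?size_map.
by rewrite size_map in px; rewrite same // fx.
Qed.

Lemma asc_map : asc (map f w) = asc w.
Proof.
rewrite /asc size_map; apply: eq_in_count => i _ /=.
case: ltnP => // iw; rewrite !(nth_map 0) ?f_ltn ?mem_nth //; exact: ltnW.
Qed.

End MonotoneRelabelling.

Lemma eq_mem_cayley x y : x =i y -> cayley x = cayley y.
Proof.
move=> xy; apply/cayleyP/cayleyP => -[x0 hx]; split.
- by rewrite -xy.
- by move=> z u; rewrite -!xy; apply: hx.
- by rewrite xy.
- by move=> z u; rewrite !xy; apply: hx.
Qed.

Lemma mem_rcons_id (v : seq nat) a : a \in v -> rcons v a =i v.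
Proof. by move=> av u; rewrite mem_rcons in_cons; case: eqP => // ->. Qed.

Lemma mem_last0 (w : seq nat) : w != [::] -> last 0 w \in w.
Proof. by case: w => // z w _; rewrite /= mem_last. Qed.

Lemma last_map0 (f : nat -> nat) w : w != [::] -> last 0 (map f w) = f (last 0 w).
Proof. by case: w => // z w _; rewrite /= last_map. Qed.

Lemma tildeE v a : tilde v a = map (bump a) v.
Proof. by apply: eq_map => c; rewrite /bump; case: leqP. Qed.

Lemma tilde_unbump w a : a \notin w -> tilde (map (unbump a) w) a = w.
Proof.
move=> aw; rewrite tildeE -map_comp -[RHS]map_id; apply/eq_in_map => c cw /=.
by apply: unbumpK; rewrite inE; apply: contraNneq aw => <-.
Qed.

Lemma unbump_mono (w : seq nat) a : a \notin w -> {in w &, {mono unbump a : c d / c <= d}}.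
Proof.
move=> aw c d cw dw.
have neq_a e : e \in w -> e \in predC1 a by rewrite inE => ew; apply: contraNneq aw => <-.
by rewrite -(leq_bump2 a) !unbumpK ?neq_a.
Qed.

Lemma cayley_bump_rcons v a : cayley v -> 0 < a <= (maxw v).+1 ->
  cayley (rcons (map (bump a) v) a).
Proof.
case/cayleyP=> v0 hv /andP [a0 a_le]; apply/cayleyP; split.
  rewrite mem_rcons in_cons negb_or eq_sym -lt0n a0 /=.
  by apply/mapP => -[c cv]; rewrite /bump; case: leqP => // _ c0; rewrite c0 cv in v0.
move=> y u; rewrite mem_rcons in_cons => yx /andP [u0 uy].
have [-> | ua] := eqVneq u a; first by rewrite mem_rcons mem_head.
rewrite mem_rcons in_cons (negbTE ua) /= -(unbumpK ua) (mem_map (can_inj (bumpK a))).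
have unbump0 : 0 < unbump a u by rewrite /unbump; case: ltnP => /=; lia.
case/orP: yx => [/eqP ya | /mapP [c cv yc]].
  have um : unbump a u <= maxw v by rewrite /unbump; case: ltnP => /=; lia.
  apply: (hv (maxw v)); last by rewrite unbump0.
  by apply: maxw_mem; apply: contraTneq um => -> /=; lia.
by apply: (hv c) => //; rewrite unbump0 -leq_bump -yc.
Qed.

Lemma cayley_unbump v a : cayley (rcons v a) -> a \notin v ->
  cayley (map (unbump a) v).
Proof.
move=> cx av; have [x0 hx] := cayleyP _ cx.
have pos c : c \in rcons v a -> 0 < c by move=> cvx; apply: cayley_pos cx cvx.
have a0 : 0 < a by apply: pos; rewrite mem_rcons mem_head.
have neq_a c : c \in v -> c != a by move=> cv; apply: contraNneq av => <-.
apply/cayleyP; split.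
  apply/mapP => -[c cv]; rewrite /unbump.
  by have := pos c; rewrite mem_rcons in_cons cv orbT => /(_ isT); case: ltnP => /=; lia.
move=> y u /mapP [c cv ->] /andP [u0 uy]; apply/mapP.
exists (bump a u); last by rewrite bumpK.
have : bump a u \in rcons v a.
  apply: (hx c); first by rewrite mem_rcons in_cons cv orbT.
  by rewrite -[c](unbumpK (neq_a c cv)) leq_bump2 uy andbT /bump; lia.
by rewrite mem_rcons in_cons eq_sym (negbTE (neq_bump a u)).
Qed.

Lemma modasc_cayley_fresh x : modasc x -> cayley x /\ fresh_ascents x.
Proof.
elim=> {x} [| | v a _ [cv fv] vn a0 al | v a _ [cv fv] vn la a_le].
- by split => // p /=; lia.
- by split => // p /=; lia.
- have av : a \in v.
    by case/cayleyP: cv => _ hv; apply: (hv (last 0 v)); rewrite ?mem_last0 ?a0.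
  split; first by rewrite (eq_mem_cayley (mem_rcons_id av)).
  by apply/fresh_ascents_rcons; split => // _; rewrite av ltnNge al.
- have bump_last : last 0 (map (bump a) v) = last 0 v.
    by rewrite last_map0 // /bump leqNgt la.
  rewrite tildeE; split.
    apply: cayley_bump_rcons => //.
    by rewrite (maxw_fresh_ascents cv fv vn); lia.
  have a_new : a \notin map (bump a) v.
    by apply/mapP => -[c _ ac]; move: (neq_bump a c); rewrite -ac eqxx.
  apply/fresh_ascents_rcons; split=> [|_]; last by rewrite bump_last la a_new.
  by apply/fresh_ascents_map => // c d _ _; exact: leq_bump2.
Qed.

Lemma cayley_fresh_modasc x : cayley x -> fresh_ascents x -> modasc x.
Proof.
have [n] := ubnP (size x); elim: n x => // n IH x.
case/lastP: x => [_ _ _ | w a]; first exact: modasc0.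
rewrite size_rcons ltnS => wn cx /fresh_ascents_rcons [fw fa].
have a0 : 0 < a by apply: cayley_pos cx _; rewrite mem_rcons mem_head.
have [w_nil | w_nil] := eqVneq w [::].
  move: cx; rewrite w_nil => /cayleyP [_ hx].
  have : 1 \in [:: a] by apply: (hx a); rewrite ?mem_head ?a0.
  by rewrite inE => /eqP <-; exact: modasc1.
have [aw | aw] := boolP (a \in w).
  apply: modasc_weak => //; last by rewrite leqNgt fa // aw.
  by apply: IH => //; rewrite -(eq_mem_cayley (mem_rcons_id aw)).
have last_lt : last 0 w < a by rewrite fa.
rewrite -(tilde_unbump aw); apply: modasc_strict.
- apply: IH; rewrite ?size_map ?cayley_unbump //.
  exact/(fresh_ascents_map (unbump_mono aw)).
- by case: (w) w_nil.
- by rewrite last_map0 // /unbump (leq_gtF (ltnW last_lt)) subn0.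
- rewrite asc_map; last exact: unbump_mono.
  have fx : fresh_ascents (rcons w a) by apply/fresh_ascents_rcons; split.
  have := @maxw_ub (rcons w a) a; rewrite mem_rcons mem_head => /(_ isT).
  rewrite (maxw_fresh_ascents cx fx) -?size_eq0 ?size_rcons // asc_rcons last_lt andbT.
  by rewrite lt0n size_eq0 w_nil addn1.
Qed.

Lemma modasc_avoidP x : modasc x <-> [/\ cayley x, ~~ contains_a x & ~~ contains_b x].
Proof.
split=> [/modasc_cayley_fresh [cx /fresh_ascentsP [na nb]] | [cx na nb]]; first by split.
by apply: cayley_fresh_modasc => //; apply/fresh_ascentsP.
Qed.

Section PermIota.

Variables (s : seq nat) (n : nat).
Hypothesis s_perm : perm_eq s (iota 0 n).

Lemma perm_iota_size : size s = n.
Proof. by rewrite (perm_size s_perm) size_iota. Qed.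

Lemma perm_iota_uniq : uniq s.
Proof. by rewrite (perm_uniq s_perm) iota_uniq. Qed.

Lemma perm_iota_mem p : (p \in s) = (p < n).
Proof. by rewrite (perm_mem s_perm) mem_iota. Qed.

Lemma perm_iota_nth_lt j : j < n -> nth 0 s j < n.
Proof. by move=> jn; rewrite -perm_iota_mem mem_nth ?perm_iota_size. Qed.

Lemma perm_iota_index_lt p : p < n -> index p s < n.
Proof. by move=> pn; rewrite -[n in _ < n]perm_iota_size index_mem perm_iota_mem. Qed.

Lemma perm_iota_nth_index p : p < n -> nth 0 s (index p s) = p.
Proof. by move=> pn; rewrite nth_index ?perm_iota_mem. Qed.

Lemma perm_iota_index_nth j : j < n -> index (nth 0 s j) s = j.
Proof. by move=> jn; rewrite index_uniq ?perm_iota_uniq ?perm_iota_size. Qed.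

Lemma perm_iota_nth_eq i j : i < n -> j < n -> (nth 0 s i == nth 0 s j) = (i == j).
Proof. by move=> i_n j_n; rewrite nth_uniq ?perm_iota_uniq ?perm_iota_size. Qed.

End PermIota.

Definition le_pos (x : seq nat) : rel nat := fun p q =>
  (nth 0 x p < nth 0 x q) || (nth 0 x p == nth 0 x q) && (q <= p).

Lemma le_pos_refl x : reflexive (le_pos x).
Proof. by move=> p; rewrite /le_pos eqxx leqnn orbT. Qed.

Lemma le_pos_total x : total (le_pos x).
Proof. by move=> p q; rewrite /le_pos; case: ltngtP => //= _; lia. Qed.

Lemma le_pos_trans x : transitive (le_pos x).
Proof.
move=> q p r; rewrite /le_pos.
by case: (ltngtP (nth 0 x p) (nth 0 x q)); case: (ltngtP (nth 0 x q) (nth 0 x r));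
  case: (ltngtP (nth 0 x p) (nth 0 x r)) => //=; lia.
Qed.

Lemma le_pos_anti x : antisymmetric (le_pos x).
Proof. by move=> p q; rewrite /le_pos; case: ltngtP => //= _; lia. Qed.

Definition sortpos x := sort (le_pos x) (iota 0 (size x)).

Section SortPos.

Variable x : seq nat.
Local Notation T := (sortpos x).
Local Notation N := (size x).

Lemma sortpos_perm : perm_eq T (iota 0 N).
Proof. by rewrite perm_sort. Qed.

Lemma sortpos_le i j : i <= j -> j < N -> le_pos x (nth 0 T i) (nth 0 T j).
Proof.
move=> ij jN; have T_sorted := sort_sorted (@le_pos_total x) (iota 0 N).
apply: (sorted_leq_nth (@le_pos_trans x) (@le_pos_refl x) 0 T_sorted) => //;
  rewrite inE size_sort size_iota //; exact: leq_ltn_trans ij jN.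
Qed.

Lemma sortpos_index_lt p q : p < N -> q < N -> le_pos x p q -> p != q ->
  index p T < index q T.
Proof.
move=> pN qN pq; apply: contraR; rewrite -leqNgt => qp.
apply/eqP/(@le_pos_anti x); rewrite pq /=.
have := sortpos_le qp (perm_iota_index_lt sortpos_perm pN).
by rewrite !(perm_iota_nth_index sortpos_perm).
Qed.

Lemma sortpos_index_pred p : 0 < p -> p < N -> nth 0 x p.-1 < nth 0 x p ->
  index p.-1 T < index p T.
Proof. by move=> p0 pN lt; apply: sortpos_index_lt; rewrite /le_pos ?lt //; lia. Qed.

Lemma sortpos_succ_eq j : j.+1 < N ->
  (nth 0 x (nth 0 T j.+1) == nth 0 x (nth 0 T j)) =
  (nth 0 x (nth 0 T j) \in take (nth 0 T j) x).
Proof.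
move=> jN; set p := nth 0 T j; set q := nth 0 T j.+1.
have pN : p < N by apply: (perm_iota_nth_lt sortpos_perm); lia.
have qN : q < N by apply: (perm_iota_nth_lt sortpos_perm); lia.
have pq : p != q by rewrite (perm_iota_nth_eq sortpos_perm) //; lia.
have le_pq : le_pos x p q := sortpos_le (leqnSn j) jN.
apply/eqP/mem_takeP => [e | [r /andP [rp rN] e]].
  exists q; rewrite // qN andbT.
  by move: le_pq; rewrite /le_pos e eqxx ltnn /= leq_eqVlt eq_sym (negbTE pq).
have le_pr : le_pos x p r by rewrite /le_pos e eqxx (ltnW rp) orbT.
have := sortpos_index_lt pN rN le_pr (negbT (gtn_eqF rp)).
rewrite (perm_iota_index_nth sortpos_perm (ltnW jN)) => jr.
have := sortpos_le jr (perm_iota_index_lt sortpos_perm rN).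
rewrite (perm_iota_nth_index sortpos_perm rN) -/q.
by move: le_pq; rewrite /le_pos e; case: ltngtP.
Qed.

Lemma sortpos_step j : cayley x -> j.+1 < N ->
  nth 0 x (nth 0 T j) <= nth 0 x (nth 0 T j.+1) <= (nth 0 x (nth 0 T j)).+1.
Proof.
case/cayleyP=> _ hx jN; set p := nth 0 T j; set q := nth 0 T j.+1.
have pN : p < N by apply: (perm_iota_nth_lt sortpos_perm); lia.
have qN : q < N by apply: (perm_iota_nth_lt sortpos_perm); lia.
have le_pq : le_pos x p q := sortpos_le (leqnSn j) jN.
have -> /= : nth 0 x p <= nth 0 x q by move: le_pq; rewrite /le_pos; case: ltngtP.
rewrite leqNgt; apply/negP => gap.
have ux : (nth 0 x p).+1 \in x by apply: (hx (nth 0 x q)); rewrite ?mem_nth //; lia.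
set r := index (nth 0 x p).+1 x.
have rN : r < N by rewrite index_mem.
have xr : nth 0 x r = (nth 0 x p).+1 by rewrite nth_index.
have pr : index p T < index r T.
  apply: sortpos_index_lt; rewrite // /le_pos ?xr ?ltnSn //.
  by apply: contra_eq_neq xr => <-; lia.
have rq : index r T < index q T.
  apply: sortpos_index_lt; rewrite // /le_pos ?xr ?gap //.
  by apply: contra_eq_neq xr => ->; lia.
by move: pr rq; rewrite !(perm_iota_index_nth sortpos_perm); lia.
Qed.

Lemma sortpos_first : cayley x -> 0 < N -> nth 0 x (nth 0 T 0) = 1.
Proof.
move=> cx N0; have [_ hx] := cayleyP _ cx.
have pos : 0 < nth 0 x (nth 0 T 0).
  by apply: cayley_pos cx _; apply: mem_nth; apply: (perm_iota_nth_lt sortpos_perm).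
have x0x : nth 0 x 0 \in x by exact: mem_nth.
have x1 : 1 \in x by apply: (hx (nth 0 x 0)); rewrite ?(cayley_pos cx x0x).
have rN : index 1 x < N by rewrite index_mem.
have := sortpos_le (leq0n _) (perm_iota_index_lt sortpos_perm rN).
by rewrite (perm_iota_nth_index sortpos_perm rN) /le_pos nth_index //; lia.
Qed.

End SortPos.

Lemma contains_fPn x : reflect
  (forall i k, i.+1 < k -> k < size x -> nth 0 x i < nth 0 x i.+1 ->
     (nth 0 x k).+1 != nth 0 x i)
  (~~ contains_f x).
Proof.
apply: (iffP hasPn) => [nf i k ik kx lt | nf i _].
  have ix : i \in iota 0 (size x) by rewrite mem_iota; lia.
  have kx' : k \in iota 0 (size x) by rewrite mem_iota; lia.
  by have /hasPn/(_ k kx') := nf i ix; rewrite ik kx lt.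
by apply/hasPn => k _; apply/negP => /and4P [ik kx lt /eqP e]; move/eqP: (nf i k ik kx lt).
Qed.

Lemma contains_f_succ x : contains_f (map succn x) = contains_f x.
Proof.
rewrite /contains_f size_map; apply: eq_in_has => i; rewrite mem_iota => /andP [_ ix].
apply: eq_in_has => k _; case: (ltnP i.+1 k) => //= ik; case: (ltnP k (size x)) => //= kx.
by rewrite !(nth_map 0) ?ltnS ?eqSS //; lia.
Qed.

Lemma sortpos_avoids_f x : fresh_ascents x -> ~~ contains_f (sortpos x).
Proof.
move=> fx; have x_perm := sortpos_perm x.
apply/contains_fPn => i k ik; rewrite (perm_iota_size x_perm) => kN lt.
set p := nth 0 (sortpos x) i in lt *; set q := nth 0 (sortpos x) i.+1 in lt.
have pN : p < size x by apply: (perm_iota_nth_lt x_perm); lia.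
have iN : i.+1 < size x by lia.
have fresh_p : nth 0 x p \notin take p x.
  rewrite -sortpos_succ_eq // -/p -/q; apply: contraTneq lt => e.
  by have := sortpos_le (leqnSn i) iN; rewrite -/p -/q /le_pos e eqxx ltnn /= -leqNgt.
apply/eqP => /esym p_pred.
have p0 : 0 < p by rewrite p_pred.
have asc_p : nth 0 x p.-1 < nth 0 x p by rewrite (fx p) ?p0.
have := sortpos_index_pred p0 pN asc_p.
have -> : p.-1 = nth 0 (sortpos x) k by rewrite p_pred.
by rewrite !(perm_iota_index_nth x_perm) //; lia.
Qed.

Definition block_end (s : seq nat) (c : nat -> nat) j :=
  (nth 0 s j == 0) ||
  (index (nth 0 s j).-1 s < j) && (c (index (nth 0 s j).-1 s) < c j).

(* [block_end] takes the labelling as an argument so that [label_seq] can feed it the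
   labels of the prefix computed so far. *)
Fixpoint label_seq (s : seq nat) k : seq nat :=
  if k is k'.+1 then
    let cs := label_seq s k' in rcons cs (nth 0 cs k' + block_end s (nth 0 cs) k')
  else [:: 1].

Definition label s j := nth 0 (label_seq s j) j.

Definition cayley_of (s : seq nat) := [seq label s (index p s) | p <- iota 0 (size s)].

Section Labels.

Variable s : seq nat.

Lemma size_label_seq k : size (label_seq s k) = k.+1.
Proof. by elim: k => //= k IH; rewrite size_rcons IH. Qed.

Lemma nth_label_seq k i : i <= k -> nth 0 (label_seq s k) i = label s i.
Proof.
elim: k => [|k IH]; first by rewrite leqn0 => /eqP ->.
rewrite leq_eqVlt => /orP [/eqP -> // | ik] /=.
by rewrite nth_rcons size_label_seq ik IH.
Qed.

Lemma block_end_ext c c' j : {in gtn j.+1, c =1 c'} -> block_end s c j = block_end s c' j.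
Proof.
move=> cc'; rewrite /block_end; case: ltnP => //= ij.
by rewrite !cc' // inE ltnS // ltnW.
Qed.

Lemma label0 : label s 0 = 1.
Proof. by []. Qed.

Lemma labelS j : label s j.+1 = label s j + block_end s (label s) j.
Proof.
rewrite {1}/label /= nth_rcons size_label_seq ltnn eqxx nth_label_seq //.
congr (_ + nat_of_bool _); apply: block_end_ext => i.
by rewrite inE ltnS => ij; rewrite nth_label_seq.
Qed.

Lemma label_mono : {homo label s : i j / i <= j}.
Proof.
apply: homo_leq => [//|y x z|i]; first exact: leq_trans.
by rewrite labelS leq_addr.
Qed.

Lemma label_pos j : 0 < label s j.
Proof. exact: leq_trans (label_mono (leq0n j)). Qed.

Lemma label_lt_block_end i k j : i <= k -> k < j -> block_end s (label s) k ->
  label s i < label s j.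
Proof.
move=> ik kj ek; apply: leq_trans (label_mono kj).
by rewrite labelS ek addn1 ltnS label_mono.
Qed.

Lemma label_interval j u : 0 < u <= label s j -> exists2 i, i <= j & label s i = u.
Proof.
elim: j => [|j IH] u_le; first by exists 0 => //; move: u_le; rewrite label0; lia.
have [-> | u_neq] := eqVneq u (label s j.+1); first by exists j.+1.
have [|i ij <-] := IH; last by exists i; rewrite // ltnW.
by move: u_le u_neq; rewrite labelS; case: block_end => /=; rewrite ?addn0 ?addn1; lia.
Qed.

End Labels.

Section CayleyOfPerm.

Variables (s : seq nat) (n : nat).
Hypothesis s_perm : perm_eq s (iota 0 n).
Local Notation be := (block_end s (label s)).

Lemma nth_cayley_of p : p < n -> nth 0 (cayley_of s) p = label s (index p s).
Proof.
move=> pn; have sn := perm_iota_size s_perm.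
by rewrite (nth_map 0) ?size_iota ?sn // nth_iota ?sn.
Qed.

Lemma nth_cayley_of_nth j : j < n -> nth 0 (cayley_of s) (nth 0 s j) = label s j.
Proof.
by move=> jn; rewrite nth_cayley_of ?perm_iota_nth_lt ?(perm_iota_index_nth s_perm).
Qed.

Lemma cayley_cayley_of : cayley (cayley_of s).
Proof.
have sn := perm_iota_size s_perm.
apply/cayleyP; split=> [|y u /mapP [p]].
  by apply/mapP => -[p _ e]; move: (label_pos s (index p s)); rewrite -e.
rewrite mem_iota sn => /andP [_ pn] -> /label_interval [i ij <-].
have i_n : i < n by have := perm_iota_index_lt s_perm pn; lia.
by rewrite -(nth_cayley_of_nth i_n) mem_nth // size_map size_iota sn perm_iota_nth_lt.
Qed.

Lemma desc_within_blocks j :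
  (forall k, k < j -> k.+1 < n -> nth 0 s k < nth 0 s k.+1 -> be k) ->
  forall i, i < j -> j < n -> label s j <= label s i -> nth 0 s j < nth 0 s i.
Proof.
elim: j => [|j IH] // asc_be i ij jn le_ji.
have not_be : ~~ be j.
  by apply: contraTN le_ji => bej; rewrite -ltnNge (label_lt_block_end _ (ltnSn j)) // -ltnS.
have desc_j : nth 0 s j.+1 < nth 0 s j.
  rewrite ltn_neqAle (perm_iota_nth_eq s_perm) ?(ltnW jn) //= (gtn_eqF (ltnSn j)) /=.
  by rewrite leqNgt; apply: contra not_be; apply: asc_be.
move: ij; rewrite ltnS leq_eqVlt => /orP [/eqP -> // | ij].
have le_j : label s j <= label s i := leq_trans (label_mono s (leqnSn j)) le_ji.
apply: ltn_trans desc_j (IH _ i ij (ltnW jn) le_j) => k kj.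
exact/asc_be/ltnW.
Qed.

Hypothesis s_f : ~~ contains_f s.

Lemma ascent_block_end j : j.+1 < n -> nth 0 s j < nth 0 s j.+1 -> be j.
Proof.
have [sn no_f] := (perm_iota_size s_perm, contains_fPn _ s_f).
elim/ltn_ind: j => j IH jn asc_j; rewrite /block_end; set p := nth 0 s j.
have [// | p0] := eqVneq p 0; rewrite /=.
have pn : p < n by apply: (perm_iota_nth_lt s_perm); lia.
set i := index p.-1 s.
have si : nth 0 s i = p.-1 by apply: (perm_iota_nth_index s_perm); lia.
have i_n : i < n by apply: (perm_iota_index_lt s_perm); lia.
have ij : i < j.
  case: (ltngtP i j.+1) => [|ji | ij]; [rewrite ltnS leq_eqVlt => /orP [/eqP ij|] // | | ].
  - by move: si; rewrite ij -/p; lia.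
  - by have := no_f j i ji; rewrite sn si -/p => /(_ i_n asc_j); lia.
  - by move: asc_j; rewrite -ij si -/p; lia.
rewrite ij ltnNge /=; apply/negP => le_ji.
have := desc_within_blocks (fun k kj => IH k kj) ij (ltnW jn) le_ji.
by rewrite si -/p; lia.
Qed.

Lemma label_le_desc i j : i < j -> j < n -> label s j <= label s i ->
  nth 0 s j < nth 0 s i.
Proof. by apply: desc_within_blocks => k _; apply: ascent_block_end. Qed.

Lemma desc_of_not_block_end j : j.+1 < n -> ~~ be j -> nth 0 s j.+1 < nth 0 s j.
Proof.
move=> jn not_be; rewrite ltn_neqAle (perm_iota_nth_eq s_perm) ?(ltnW jn) //.
by rewrite (gtn_eqF (ltnSn j)) leqNgt; apply: contra not_be; apply: ascent_block_end.
Qed.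

Lemma sortpos_cayley_of : sortpos (cayley_of s) = s.
Proof.
have sn := perm_iota_size s_perm.
have s_sorted : sorted (le_pos (cayley_of s)) s.
  apply/(sortedP 0) => j; rewrite sn => jn.
  rewrite /le_pos (nth_cayley_of_nth (ltnW jn)) (nth_cayley_of_nth jn) labelS.
  case be_j : (be j); first by rewrite addn1 ltnSn.
  by rewrite addn0 ltnn eqxx ltnW // desc_of_not_block_end ?be_j.
rewrite /sortpos size_map size_iota sn.
apply: (sorted_eq (@le_pos_trans _) (@le_pos_anti _) (sort_sorted (@le_pos_total _) _)).
  exact: s_sorted.
by rewrite perm_sort perm_sym.
Qed.

Lemma label_in_take j : j < n ->
  (label s j \in take (nth 0 s j) (cayley_of s)) = (j.+1 < n) && ~~ be j.
Proof.
have sn := perm_iota_size s_perm.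
move=> jn; apply/mem_takeP/andP => [[r /andP [r_lt]] | [j1n not_be]].
  rewrite size_map size_iota sn => rn; rewrite (nth_cayley_of rn).
  set k := index r s => lab_k; have kn : k < n := perm_iota_index_lt s_perm rn.
  have sk : nth 0 s k = r := perm_iota_nth_index s_perm rn.
  case: (ltngtP k j) => [kj | jk | kj].
  - by have := label_le_desc kj jn; rewrite lab_k leqnn sk => /(_ isT); lia.
  - split; first by lia.
    apply/negP => be_j; move/eqP: lab_k; apply/negP.
    by rewrite neq_ltn (label_lt_block_end (leqnn j) jk be_j) orbT.
  - by move: r_lt; rewrite -sk kj ltnn.
have s_desc := desc_of_not_block_end j1n not_be.
exists (nth 0 s j.+1); last by rewrite nth_cayley_of_nth // labelS (negbTE not_be) addn0.
by rewrite s_desc size_map size_iota sn perm_iota_nth_lt.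
Qed.

Lemma label_pred_lt j : j < n -> 0 < nth 0 s j ->
  (label s (index (nth 0 s j).-1 s) < label s j) = (j.+1 == n) || be j.
Proof.
move=> jn sj0; set i := index (nth 0 s j).-1 s.
have sn : (nth 0 s j).-1 < n by have := perm_iota_nth_lt s_perm jn; lia.
have si : nth 0 s i = (nth 0 s j).-1 := perm_iota_nth_index s_perm sn.
have i_n : i < n := perm_iota_index_lt s_perm sn.
have [last_j | not_last] /= := eqVneq j.+1 n.
  have ij : i < j.
    by rewrite ltn_neqAle -ltnS last_j i_n andbT; apply: contra_eq_neq si => ->; lia.
  rewrite ltn_neqAle label_mono ?(ltnW ij) // andbT; apply/negP => /eqP eq_lab.
  by have := label_le_desc ij jn; rewrite eq_lab leqnn si => /(_ isT); lia.
rewrite /block_end eqn0Ngt sj0 /= -/i; case: (ltnP i j) => //= ji.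
by apply/negbTE; rewrite -leqNgt label_mono.
Qed.

Lemma fresh_ascents_cayley_of : fresh_ascents (cayley_of s).
Proof.
have sn := perm_iota_size s_perm.
move=> p; rewrite size_map size_iota sn => /andP [p0 pn].
set j := index p s; have jn : j < n := perm_iota_index_lt s_perm pn.
have sj : nth 0 s j = p := perm_iota_nth_index s_perm pn.
have sj1 : (nth 0 s j).-1 < n by rewrite sj; lia.
have sj0 : 0 < nth 0 s j by rewrite sj.
rewrite -sj nth_cayley_of_nth // (nth_cayley_of sj1) (label_pred_lt jn sj0).
rewrite label_in_take //.
by rewrite negb_and negbK -leqNgt eqn_leq jn.
Qed.

End CayleyOfPerm.

Section LabelSortPos.

Variable x : seq nat.
Hypotheses (cx : cayley x) (fx : fresh_ascents x).
Local Notation T := (sortpos x).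
Local Notation N := (size x).

Lemma block_end_sortpos j : j.+1 < N ->
  block_end T (fun i => nth 0 x (nth 0 T i)) j =
  (nth 0 x (nth 0 T j.+1) != nth 0 x (nth 0 T j)).
Proof.
move=> jN; have T_perm := sortpos_perm x.
rewrite sortpos_succ_eq // /block_end; set p := nth 0 T j.
case: (posnP p) => [-> | p0]; first by rewrite take0.
have pN : p < N by apply: (perm_iota_nth_lt T_perm); lia.
have p1N : p.-1 < N by lia.
rewrite /= (perm_iota_nth_index T_perm p1N) -(@fx p) ?p0 //.
case: ltnP => //= jle; apply/esym/negbTE/negP => lt.
have := sortpos_index_pred p0 pN lt.
by rewrite (perm_iota_index_nth T_perm) //; lia.
Qed.

Lemma label_sortpos j : j < N -> label T j = nth 0 x (nth 0 T j).
Proof.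
elim/ltn_ind: j => -[_ N0 | j IH jN]; first by rewrite label0 sortpos_first.
rewrite labelS.
have -> : block_end T (label T) j = block_end T (fun i => nth 0 x (nth 0 T i)) j.
  by apply: block_end_ext => i; rewrite inE => ij; apply: IH => //; lia.
rewrite block_end_sortpos // IH //; last by lia.
have := sortpos_step cx jN.
by case: (_ =P _) => [-> | ne] /=; rewrite ?addn0 ?addn1; lia.
Qed.

Lemma cayley_of_sortpos : cayley_of T = x.
Proof.
have T_perm := sortpos_perm x; have TN := perm_iota_size T_perm.
apply: (@eq_from_nth _ 0) => [|p]; first by rewrite size_map size_iota TN.
rewrite size_map size_iota TN => pN.
rewrite (nth_cayley_of T_perm pN) label_sortpos ?perm_iota_index_lt //.
by rewrite (perm_iota_nth_index T_perm).
Qed.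

End LabelSortPos.

Lemma perm_iota1_cayley s n : perm_eq s (iota 1 n) -> cayley s.
Proof.
move=> s_perm; apply/cayleyP; split=> [|y u]; first by rewrite (perm_mem s_perm) mem_iota.
by rewrite !(perm_mem s_perm) !mem_iota; lia.
Qed.

Lemma cayley_uniq_perm s : cayley s -> uniq s -> perm_eq s (iota 1 (size s)).
Proof.
move=> cs us; have := cayley_undup cs; rewrite undup_id // => s_perm.
by rewrite (perm_size s_perm) size_iota.
Qed.

Lemma perm_iota_succ s n : perm_eq s (iota 0 n) -> perm_eq (map succn s) (iota 1 n).
Proof. by move=> s_perm; rewrite (iotaDl 1 0); apply: perm_map. Qed.

Lemma perm_iota_pred s n : perm_eq s (iota 1 n) -> perm_eq (map predn s) (iota 0 n).
Proof. by move=> /(perm_map predn); rewrite (iotaDl 1 0) -map_comp map_id. Qed.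

Lemma pred_succ_cayley s : cayley s -> map succn (map predn s) = s.
Proof.
move=> cs; rewrite -map_comp -[RHS]map_id; apply/eq_in_map => v vs /=.
by rewrite prednK // (cayley_pos cs vs).
Qed.

Definition fishburn_of x := map succn (sortpos x).

Definition cayley_of_fishburn p := cayley_of (map predn p).

Lemma fishburn_ofP x : [&& cayley x, ~~ contains_a x & ~~ contains_b x] ->
  [/\ [&& cayley (fishburn_of x), uniq (fishburn_of x) & ~~ contains_f (fishburn_of x)],
      cayley_of_fishburn (fishburn_of x) = x & size (fishburn_of x) = size x].
Proof.
case/and3P=> cx na nb; have fx : fresh_ascents x by apply/fresh_ascentsP.
have F_perm := perm_iota_succ (sortpos_perm x).
split; last by rewrite size_map size_sort size_iota.
  rewrite (perm_iota1_cayley F_perm) (perm_uniq F_perm) iota_uniq contains_f_succ.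
  exact: sortpos_avoids_f.
by rewrite /cayley_of_fishburn -map_comp map_id cayley_of_sortpos.
Qed.

Lemma cayley_of_fishburnP p : [&& cayley p, uniq p & ~~ contains_f p] ->
  [/\ [&& cayley (cayley_of_fishburn p), ~~ contains_a (cayley_of_fishburn p)
        & ~~ contains_b (cayley_of_fishburn p)],
      fishburn_of (cayley_of_fishburn p) = p & size (cayley_of_fishburn p) = size p].
Proof.
case/and3P=> cp up p_f; have s_perm := perm_iota_pred (cayley_uniq_perm cp up).
have s_f : ~~ contains_f (map predn p) by rewrite -contains_f_succ pred_succ_cayley.
split; last by rewrite size_map size_iota size_map.
  have /fresh_ascentsP [na nb] := fresh_ascents_cayley_of s_perm s_f.
  by rewrite /cayley_of_fishburn (cayley_cayley_of s_perm) na nb.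
by rewrite /fishburn_of (sortpos_cayley_of s_perm s_f) pred_succ_cayley.
Qed.

Section TupleWords.

Variables (n : nat) (P Q : pred (seq nat)) (f g : seq nat -> seq nat).

Lemma card_tuple_words_leq :
  (forall y, P y -> [/\ Q (f y), g (f y) = y & size (f y) = size y]) ->
  (forall y, Q y -> {in y, forall v, v <= size y}) ->
  #|[set t : n.-tuple 'I_n.+1 | P (map val t)]| <=
  #|[set t : n.-tuple 'I_n.+1 | Q (map val t)]|.
Proof.
move=> fPQ Q_bound.
pose h (t : n.-tuple 'I_n.+1) : n.-tuple 'I_n.+1 := insubd t (map inord (f (map val t))).
have val_h (t : n.-tuple 'I_n.+1) : P (map val t) -> map val (h t) = f (map val t).
  move=> Pt; have [Qf _ size_f] := fPQ _ Pt.
  have size_t : size (map val t) = n by rewrite size_map size_tuple.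
  rewrite /h insubdK; last by rewrite unfold_in /= size_map size_f size_t.
  rewrite -map_comp -[RHS]map_id; apply/eq_in_map => v vf /=.
  by apply: inordK; rewrite ltnS -size_t -size_f Q_bound.
have h_inj : {in [set t : n.-tuple 'I_n.+1 | P (map val t)] &, injective h}.
  move=> t1 t2; rewrite !inE => P1 P2 h12.
  have [[_ g1 _] [_ g2 _]] := (fPQ _ P1, fPQ _ P2).
  apply/val_inj/(inj_map val_inj).
  have := congr1 (fun t : n.-tuple 'I_n.+1 => g (map val t)) h12.
  by rewrite /= !val_h // g1 g2.
rewrite -(card_in_imset h_inj); apply/subset_leq_card/subsetP => _ /imsetP [t Pt ->].
by move: Pt; rewrite !inE => Pt; rewrite val_h //; case: (fPQ _ Pt).
Qed.

End TupleWords.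

Lemma card_tuple_words_eq n (P Q : pred (seq nat)) (f g : seq nat -> seq nat) :
  (forall y, P y -> [/\ Q (f y), g (f y) = y & size (f y) = size y]) ->
  (forall y, Q y -> [/\ P (g y), f (g y) = y & size (g y) = size y]) ->
  (forall y, P y || Q y -> {in y, forall v, v <= size y}) ->
  #|[set t : n.-tuple 'I_n.+1 | P (map val t)]| =
  #|[set t : n.-tuple 'I_n.+1 | Q (map val t)]|.
Proof.
move=> fPQ gQP bound; apply/eqP; rewrite eqn_leq.
rewrite (card_tuple_words_leq n fPQ) => [|y Qy]; last by apply: bound; rewrite Qy orbT.
by rewrite (card_tuple_words_leq n gQP) // => y Py; apply: bound; rewrite Py.
Qed.

Theorem theorem7p3 :
  (forall x : seq nat,
     modasc x <-> [/\ cayley x, ~~ contains_a x & ~~ contains_b x]) /\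
  (forall n : nat,
     #|[set t : n.-tuple 'I_n.+1 |
         [&& cayley (map val t), ~~ contains_a (map val t) & ~~ contains_b (map val t)]]|
   = #|[set t : n.-tuple 'I_n.+1 |
         [&& cayley (map val t), uniq (map val t) & ~~ contains_f (map val t)]]|).
Proof.
split=> [x | n]; first exact: modasc_avoidP.
apply: card_tuple_words_eq fishburn_ofP cayley_of_fishburnP _ => y.
by case/orP => /and3P [cy _ _] v; apply: cayley_leq_size.
Qed.
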